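(* Let $x=(x_1,\dots,x_n)$ and $y=(y_1,\dots,y_n)$ be indeterminates, and let $\phi:\mathbb{R}(y)\to\mathbb{R}(x)$ and $\psi:\mathbb{R}(x)\to\mathbb{R}(y)$ be mutually inverse $\mathbb{R}$-algebra isomorphisms of rational function fields (an invertible rational change of variables, $\phi(y_j)=\phi_j(x)$, $\psi(x_i)=\psi_i(y)$). For an integer matrix $A\in M_{r\times n}(\mathbb{Z})$ and $\lambda\in\mathbb{T}^r$, write $(\lambda\star f)(x)=f(\lambda^A*x)$ for $f\in\mathbb{R}(x)$. Say $A$ is dimensionally consistent with $\phi$ if for every $j$ there is $\beta_j\in\mathbb{Z}^r$ with $\lambda\star\phi(y_j)=\lambda^{\beta_j}\phi(y_j)$ for all $\lambda\in\mathbb{T}^r$; define analogously, for $B\in M_{r'\times n}(\mathbb{Z})$ acting on $\mathbb{R}(y)$ by $(\mu\bullet g)(y)=g(\mu^B*y)$, when $B$ is dimensionally consistent with $\psi$ (each $\psi(x_i)$ is scaled by a monomial character of $\mu$). Then: (1) The maximum of $\operatorname{rank}A$ over all integer matrices $A$ (with $n$ columns) dimensionally consistent with $\phi$ equals the maximum of $\operatorname{rank}B$ over all integer matrices $B$ dimensionally consistent with $\psi$. (2) Let $F_1,\dots,F_s\in\mathbb{R}(x)$ and $H_l=\psi(F_l)\in\mathbb{R}(y)$. Then the maximum of $\operatorname{rank}A$ over all $A$ dimensionally consistent with $\phi$ and fixing every $F_l$ (i.e. $\lambda\star F_l=F_l$ for all $\lambda,l$) equals the maximum of $\operatorname{rank}B$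 over all $B$ dimensionally consistent with $\psi$ and fixing every $H_l$. Consequently (Theorem on changes of variables): if two ODE systems are linked by an invertible rational change of variables, the maximal scaling symmetry of each system that also makes the change of variables dimensionally consistent has the same rank for both systems.
   Context: $\mathbb{T}^r$ is the group $(\mathbb{R}\setminus\{0\})^r$ under componentwise multiplication. For $a\in\mathbb{Z}^r$, $\lambda^a=\prod_k\lambda_k^{a_k}$; for a matrix $A$ with columns $A_1,\dots,A_n$, $\lambda^A=(\lambda^{A_1},\dots,\lambda^{A_n})$ and $\lambda^A*x=(\lambda^{A_1}x_1,\dots,\lambda^{A_n}x_n)$. The rank of a scaling matrix is the dimension of the scaling action. For an ODE system written as $\frac{dz}{dt}=\frac{z*F(t,z,c)}{t}$ with all quantities (time, dependent variables, parameters) listed as $x_1,\dots,x_n$, a scaling matrix is a scaling symmetry exactly when it fixes the rational functions $F_l$; the second system is obtained by rewriting the $F_l$ in the new quantities, i.e. as $H_l=\psi(F_l)$. *)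

From HB Require Import structures.
From mathcomp Require Import all_boot all_order all_algebra.
From mathcomp Require Import mpoly fraction.
From Stdlib Require Import Rdefinitions.
From mathcomp Require Import Rstruct.

Set Implicit Arguments.
Unset Strict Implicit.
Unset Printing Implicit Defensive.

Import Order.TTheory GRing.Theory Num.Theory.
Local Open Scope ring_scope.

Definition RF (n : nat) : Type := {fraction {mpoly R[n]}}.

Definition tof (n : nat) (p : {mpoly R[n]}) : RF n := FracField.tofrac p.

Definition cst (n : nat) (c : R) : RF n := tof (c%:MP).

Definition var (n : nat) (i : 'I_n) : RF n := tof 'X_i.

Definition monchar (r : nat) (lam : 'I_r -> R) (a : 'I_r -> int) : R :=
  \prod_(k < r) (lam k) ^ (a k).

Definition in_torus (r : nat) (lam : 'I_r -> R) : Prop :=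
  forall k, lam k != 0.

Definition colchar (r n : nat) (A : 'M[int]_(r, n)) (lam : 'I_r -> R)
  (i : 'I_n) : R := monchar lam (fun k => A k i).

Definition mscale (r n : nat) (A : 'M[int]_(r, n)) (lam : 'I_r -> R)
  (p : {mpoly R[n]}) : {mpoly R[n]} :=
  mmap (@mpolyC n R) (fun i => (colchar A lam i)%:MP * 'X_i) p.

Definition fscale (r n : nat) (A : 'M[int]_(r, n)) (lam : 'I_r -> R)
  (f : RF n) : RF n :=
  let q := repr f in
  tof (mscale A lam \n_q) / tof (mscale A lam \d_q).

Definition dim_consistent (n r : nat) (phi : RF n -> RF n)
  (A : 'M[int]_(r, n)) : Prop :=
  forall j : 'I_n, exists beta : 'I_r -> int,
    forall lam : 'I_r -> R, in_torus lam ->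
      fscale A lam (phi (var j)) = cst n (monchar lam beta) * phi (var j).

Definition fixes_all (n r s : nat) (A : 'M[int]_(r, n)) (F : 'I_s -> RF n)
  : Prop :=
  forall lam : 'I_r -> R, in_torus lam -> forall l, fscale A lam (F l) = F l.

Definition zrank (r n : nat) (A : 'M[int]_(r, n)) : nat :=
  \rank (map_mx (fun z : int => z%:~R : rat) A).

Definition is_max_rank (n : nat) (P : forall r : nat, 'M[int]_(r, n) -> Prop)
  (k : nat) : Prop :=
  (exists (r : nat) (A : 'M[int]_(r, n)), P r A /\ zrank A = k) /\
  (forall (r : nat) (A : 'M[int]_(r, n)), P r A -> leq (zrank A) k).

(* Let A be dimensionally consistent with phi, with phi(y_j) scaled by the
   character lambda^(beta_j), and let B be the matrix with columns beta_j.
   The maps f |-> phi(f) o (lambda^A * _) and f |-> phi(f o (lambda^B * _))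
   are R-algebra morphisms R(y) -> R(x) agreeing on the y_j, hence equal;
   conjugating by psi shows that B is dimensionally consistent with psi (with
   exponents the columns of A) and fixes psi(F_l) whenever A fixes F_l.  If
   lambda^B = 1 then the B-scaling is the identity, hence so is the A-scaling
   of x_i = phi(psi(x_i)), so lambda^A = 1; for lambda = exp(v) with v a
   rational vector in the left kernel of B this gives ker B <= ker A, i.e.
   rank A <= rank B.  By symmetry the two maxima coincide. *)
From HB Require Import structures.
From mathcomp Require Import all_boot all_order all_algebra.
From mathcomp Require Import mpoly fraction generic_quotient.
From Stdlib Require Import Rdefinitions Rtrigo_def Exp_prop Rpower.
From mathcomp Require Import Rstruct zify.
Import Order.TTheory GRing.Theory Num.Theory.
Set Implicit Arguments.
Unset Strict Implicit.
Unset Printing Implicit Defensive.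
Local Open Scope ring_scope.

Lemma tofrac_numden (T : idomainType) (f : {fraction T}) :
  f = FracField.tofrac (\n_(repr f)) / FracField.tofrac (\d_(repr f)).
Proof.
rewrite -[f in LHS]reprK; set x := repr f; have dx_neq0 := denom_ratioP x.
rewrite -[x in LHS]Ratio_numden /FracField.tofrac; unlock.
change ((\pi_{fraction T} (Ratio \n_x \d_x))%qT =
  FracField.mul (\pi_{fraction T} (Ratio \n_x 1))%qT
                (FracField.inv (\pi_{fraction T} (Ratio \d_x 1))%qT)).
rewrite -FracField.pi_inv -FracField.pi_mul.
apply/eqmodP; rewrite /= FracField.equivfE /FracField.mulf /FracField.invf.
rewrite !numden_Ratio ?oner_neq0 ?mulf_neq0 ?oner_neq0 //.
by rewrite mulr1 mul1r mulrC.
Qed.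

Lemma mpoly_morph_eq n (T : nzRingType) (g1 g2 : {mpoly R[n]} -> T) :
  {morph g1 : p q / p + q} -> {morph g1 : p q / p * q} ->
  {morph g2 : p q / p + q} -> {morph g2 : p q / p * q} ->
  (forall c, g1 c%:MP = g2 c%:MP) -> (forall i, g1 'X_i = g2 'X_i) ->
  g1 =1 g2.
Proof.
move=> g1D g1M g2D g2M eqC eqX.
elim/mpolyind => [|c m p _ _ IH]; first by rewrite -mpolyC0 eqC.
rewrite g1D g2D IH -mul_mpolyC g1M g2M eqC mpolyXE_id; congr (_ * _ + _).
apply: (big_ind (fun x => g1 x = g2 x)); first by rewrite -mpolyC1 eqC.
  by move=> x y hx hy; rewrite g1M g2M hx hy.
move=> i _; elim: (m i) => [|k IHk]; first by rewrite !expr0 -mpolyC1 eqC.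
by rewrite !exprS g1M g2M IHk eqX.
Qed.

Section RalgMorphisms.

Variable n : nat.

Definition Ralg_morph (g : RF n -> RF n) : Prop :=
  [/\ {morph g : x y / x + y}, {morph g : x y / x * y},
      g 1 = 1 & forall c, g (cst n c) = cst n c].

Lemma rmorph_Ralg_morph (g : {rmorphism RF n -> RF n}) :
  (forall c, g (cst n c) = cst n c) -> Ralg_morph g.
Proof. by split; [exact: rmorphD | exact: rmorphM | exact: rmorph1 |]. Qed.

Lemma Ralg_morph_comp (g1 g2 : RF n -> RF n) :
  Ralg_morph g1 -> Ralg_morph g2 -> Ralg_morph (g1 \o g2).
Proof.
case=> D1 M1 one1 C1 [D2 M2 one2 C2]; split.
- by move=> x y /=; rewrite D2 D1.
- by move=> x y /=; rewrite M2 M1.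
- by rewrite /= one2 one1.
- by move=> c /=; rewrite C2 C1.
Qed.

Lemma Ralg_morphV (g : RF n -> RF n) :
  Ralg_morph g -> forall x, x != 0 -> g x^-1 = (g x)^-1.
Proof. by case=> _ gM g1 _ x x_neq0; apply/esym/mulr1_eq; rewrite -gM mulfV. Qed.

(* R(x) is generated as a field over R by the variables. *)
Lemma Ralg_morph_eq (g1 g2 : RF n -> RF n) :
  Ralg_morph g1 -> Ralg_morph g2 ->
  (forall i, g1 (var i) = g2 (var i)) -> g1 =1 g2.
Proof.
move=> hg1 hg2 eq_var f.
case: (hg1) => D1 M1 _ C1; case: (hg2) => D2 M2 _ C2.
have eq_tof : (fun p => g1 (tof p)) =1 (fun p => g2 (tof p)).
  apply: mpoly_morph_eq => [p q|p q|p q|p q|c|i] //=.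
  - by rewrite /tof rmorphD D1.
  - by rewrite /tof rmorphM M1.
  - by rewrite /tof rmorphD D2.
  - by rewrite /tof rmorphM M2.
  - by have := C1 c; have := C2 c; rewrite /cst => -> ->.
  - exact: eq_var.
have den_neq0 : tof (\d_(repr f)) != 0 by rewrite /tof tofrac_eq0 denom_ratioP.
rewrite (tofrac_numden f) M1 M2.
by rewrite (Ralg_morphV hg1) // (Ralg_morphV hg2) // !eq_tof.
Qed.

End RalgMorphisms.

Lemma mscaleD r n (A : 'M[int]_(r, n)) lam : {morph mscale A lam : p q / p + q}.
Proof. exact: rmorphD. Qed.

Lemma mscaleM r n (A : 'M[int]_(r, n)) lam : {morph mscale A lam : p q / p * q}.
Proof. exact: rmorphM. Qed.

Lemma mscaleC r n (A : 'M[int]_(r, n)) lam c : mscale A lam c%:MP = c%:MP.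
Proof. by rewrite /mscale mmapC. Qed.

Lemma mscaleX r n (A : 'M[int]_(r, n)) lam i :
  mscale A lam 'X_i = (colchar A lam i)%:MP * 'X_i.
Proof. by rewrite /mscale mmapX mmap1U. Qed.

Section Scaling.

Variables (r n : nat) (A : 'M[int]_(r, n)) (lam : 'I_r -> R).
Hypothesis lam_torus : in_torus lam.

Lemma colchar_neq0 i : colchar A lam i != 0.
Proof.
rewrite /colchar /monchar prodf_seq_neq0.
by apply/allP => k _; rewrite expfz_eq0 negb_and lam_torus orbT.
Qed.

Lemma mscaleK : cancel (mscale A lam) (mscale A (fun k => (lam k)^-1)).
Proof.
apply: (mpoly_morph_eq (g2 := id)) => [p q|p q|//|//|c|i] /=.
- by rewrite !mscaleD.
- by rewrite !mscaleM.
- by rewrite !mscaleC.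
have colcharV : colchar A (fun k => (lam k)^-1) i = (colchar A lam i)^-1.
  by rewrite /colchar /monchar -prodfV; apply: eq_bigr => k _; rewrite expfV.
rewrite mscaleX mscaleM mscaleC mscaleX colcharV mulrA -mpolyCM.
by rewrite mulfV ?colchar_neq0 // mpolyC1 mul1r.
Qed.

Lemma mscale_eq0 p : (mscale A lam p == 0) = (p == 0).
Proof.
apply/eqP/eqP => [p0|->]; last exact: rmorph0.
by rewrite -[p]mscaleK p0 /mscale rmorph0.
Qed.

Lemma fscale_frac a b : b != 0 ->
  fscale A lam (tof a / tof b) = tof (mscale A lam a) / tof (mscale A lam b).
Proof.
move=> b_neq0; rewrite /fscale; set q := repr _.
have dq_neq0 : \d_q != 0 := denom_ratioP q.
have cross : a * \d_q = \n_q * b.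
  apply/eqP; rewrite -tofrac_eq !rmorphM /= -eqr_div ?tofrac_eq0 //.
  by rewrite -tofrac_numden.
apply/eqP; rewrite eqr_div ?tofrac_eq0 ?mscale_eq0 // /tof -!tofracM.
by rewrite -!mscaleM cross.
Qed.

Lemma fscale_tof p : fscale A lam (tof p) = tof (mscale A lam p).
Proof.
rewrite -[tof p]divr1 -(tofrac1 _) fscale_frac ?oner_neq0 //.
by rewrite -mpolyC1 mscaleC mpolyC1 /tof tofrac1 divr1.
Qed.

Lemma fscale_Ralg_morph : Ralg_morph (fscale A lam).
Proof.
split.
- move=> x y; rewrite (tofrac_numden x) (tofrac_numden y).
  rewrite addf_div ?tofrac_eq0 ?denom_ratioP // -!tofracM -tofracD.
  rewrite !fscale_frac ?mulf_neq0 ?denom_ratioP // mscaleD !mscaleM /tof.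
  by rewrite tofracD !tofracM addf_div ?tofrac_eq0 ?mscale_eq0 ?denom_ratioP.
- move=> x y; rewrite (tofrac_numden x) (tofrac_numden y) mulf_div -!tofracM.
  rewrite !fscale_frac ?mulf_neq0 ?denom_ratioP // !mscaleM /tof.
  by rewrite !tofracM mulf_div.
- by rewrite -(tofrac1 _) fscale_tof -mpolyC1 mscaleC.
- by move=> c; rewrite /cst fscale_tof mscaleC.
Qed.

Lemma fscale_var i : fscale A lam (var i) = cst n (colchar A lam i) * var i.
Proof. by rewrite fscale_tof mscaleX /tof tofracM. Qed.

End Scaling.

(* Parse the argument of exp in ring_scope, so that ring lemmas rewrite
   under it. *)
Local Arguments exp x%_ring_scope.

Lemma exp0 : exp 0 = 1.
Proof. exact: exp_0. Qed.

Lemma expD : {morph exp : x y / x + y >-> x * y}.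
Proof. exact: exp_plus. Qed.

Lemma expN x : exp (- x) = (exp x)^-1.
Proof. by rewrite -RinvE; exact: exp_Ropp. Qed.

Lemma exp_intr (x : R) (z : int) : exp x ^ z = exp (x * z%:~R).
Proof.
have exp_natr (m : nat) : exp x ^+ m = exp (x * m%:R).
  elim: m => [|m IHm]; first by rewrite expr0 mulr0 exp0.
  by rewrite exprS IHm -expD -natr1 mulrDr mulr1 addrC.
case: z => m; first exact: exp_natr.
rewrite NegzE -exprz_inv -expfV intrN mulrN expN; congr _^-1; exact: exp_natr.
Qed.

Lemma colchar_exp r n (A : 'M[int]_(r, n)) (v : 'I_r -> R) i :
  colchar A (fun k => exp (v k)) i = exp (\sum_k v k * (A k i)%:~R).
Proof.
rewrite /colchar /monchar; under eq_bigr do rewrite exp_intr.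
by rewrite (big_morph exp expD exp0).
Qed.

(* A rational row vector v with v B = 0 gives the torus point exp(v). *)
Lemma zrank_leq_char_kernel r n (A B : 'M[int]_(r, n)) :
  (forall lam, in_torus lam -> (forall j, colchar B lam j = 1) ->
     forall i, colchar A lam i = 1) ->
  leq (zrank A) (zrank B).
Proof.
move=> kerBA; rewrite /zrank.
set Aq := map_mx _ A; set Bq := map_mx _ B.
have sub_ker : (kermx Bq <= kermx Aq)%MS.
  apply/row_subP => k; set v := row k (kermx Bq).
  have vB : v *m Bq = 0 by apply/sub_kermxP; exact: row_sub.
  apply/sub_kermxP; pose lam k := exp (ratr (v 0 k)).
  have colchar_lam (X : 'M[int]_(r, n)) j : colchar X lam j =
      exp (ratr ((v *m map_mx (fun z : int => z%:~R : rat) X) 0 j)).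
    rewrite colchar_exp mxE rmorph_sum; congr exp; apply: eq_bigr => k' _.
    by rewrite rmorphM /= !mxE ratr_int.
  apply/matrixP => i j; rewrite (ord1 i) [RHS]mxE.
  have : colchar A lam j = 1.
    apply: kerBA => [k'|j']; first exact/eqP/exp_neq_0.
    by rewrite colchar_lam -/Bq vB mxE rmorph0 exp0.
  rewrite colchar_lam -exp0 => /exp_inv /eqP.
  by rewrite fmorph_eq0 => /eqP.
have := mxrankS sub_ker; rewrite !mxrank_ker.
have := rank_leq_row Aq; have := rank_leq_row Bq.
lia.
Qed.

Lemma var_neq0 n (i : 'I_n) : var i != 0.
Proof.
rewrite /var tofrac_eq0; apply/negP => /eqP Xi0.
have := congr1 (mcoeff U_(i)) Xi0.
by rewrite mcoeffX eqxx mcoeff0 => /eqP; rewrite oner_eq0.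
Qed.

Definition exponent_mx r n (beta : 'I_n -> 'I_r -> int) : 'M[int]_(r, n) :=
  \matrix_(k, j) beta j k.

Lemma colchar_exponent_mx r n (beta : 'I_n -> 'I_r -> int) lam j :
  colchar (exponent_mx beta) lam j = monchar lam (beta j).
Proof. by apply: eq_bigr => k _; rewrite mxE. Qed.

Section ChangeOfVariables.

Variables (n r : nat) (phi psi : {rmorphism RF n -> RF n}).
Hypothesis phi_alg : forall c : R, phi (cst n c) = cst n c.
Hypothesis psi_alg : forall c : R, psi (cst n c) = cst n c.
Hypotheses (phi_psi : cancel psi phi) (psi_phi : cancel phi psi).

Variables (A : 'M[int]_(r, n)) (beta : 'I_n -> 'I_r -> int).
Hypothesis fscale_phi_var : forall j lam, in_torus lam ->
  fscale A lam (phi (var j)) = cst n (monchar lam (beta j)) * phi (var j).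

Let B := exponent_mx beta.

Lemma fscale_phi lam : in_torus lam ->
  forall f, fscale A lam (phi f) = phi (fscale B lam f).
Proof.
move=> lam_torus; have phi_morph := rmorph_Ralg_morph phi_alg.
apply: Ralg_morph_eq => [||j].
- exact: Ralg_morph_comp (fscale_Ralg_morph A lam_torus) phi_morph.
- exact: Ralg_morph_comp phi_morph (fscale_Ralg_morph B lam_torus).
by rewrite /= fscale_phi_var // fscale_var // rmorphM phi_alg colchar_exponent_mx.
Qed.

Lemma fscale_psi lam : in_torus lam ->
  forall f, fscale B lam (psi f) = psi (fscale A lam f).
Proof. by move=> lam_torus f; rewrite -{2}(phi_psi f) fscale_phi ?psi_phi. Qed.

Lemma dim_consistent_exponent_mx : dim_consistent psi B.
Proof.
move=> i; exists (fun k => A k i) => lam lam_torus.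
by rewrite fscale_psi // fscale_var // rmorphM psi_alg.
Qed.

Lemma zrank_leq_exponent_mx : leq (zrank A) (zrank B).
Proof.
apply: zrank_leq_char_kernel => lam lam_torus charB1 i.
have fscaleB_id : fscale B lam =1 id.
  apply: Ralg_morph_eq (fscale_Ralg_morph B lam_torus) _ _ => // j.
  by rewrite fscale_var // charB1 /cst mpolyC1 /tof tofrac1 mul1r.
have := fscale_phi lam_torus (psi (var i)).
rewrite fscaleB_id phi_psi fscale_var // => /eqP.
rewrite -subr_eq0 -{2}[var i]mul1r -mulrBl mulf_eq0 (negbTE (var_neq0 i)) orbF.
by rewrite subr_eq0 /cst -[1](tofrac1 _) -mpolyC1 /tof tofrac_eq mpolyC_eq => /eqP.
Qed.

End ChangeOfVariables.

Lemma dim_consistent_transfer n (phi psi : {rmorphism RF n -> RF n})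
  (phi_alg : forall c : R, phi (cst n c) = cst n c)
  (psi_alg : forall c : R, psi (cst n c) = cst n c)
  (phi_psi : cancel psi phi) (psi_phi : cancel phi psi)
  r (A : 'M[int]_(r, n)) :
  dim_consistent phi A ->
  exists B : 'M[int]_(r, n),
    [/\ dim_consistent psi B, leq (zrank A) (zrank B) &
        forall lam, in_torus lam ->
          forall f, fscale B lam (psi f) = psi (fscale A lam f)].
Proof.
move=> /fin_all_exists [beta fscale_phi_var].
exists (exponent_mx beta); split.
- exact (dim_consistent_exponent_mx phi_alg psi_alg phi_psi psi_phi fscale_phi_var).
- exact (zrank_leq_exponent_mx phi_alg phi_psi fscale_phi_var).
- exact (fscale_psi phi_alg phi_psi psi_phi fscale_phi_var).
Qed.

Lemma is_max_rank_dominated n (P Q : forall r, 'M[int]_(r, n) -> Prop) k :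
  (forall r A, P r A -> exists2 B, Q r B & leq (zrank A) (zrank B)) ->
  (forall r B, Q r B -> exists2 A, P r A & leq (zrank B) (zrank A)) ->
  is_max_rank P k -> is_max_rank Q k.
Proof.
move=> PQ QP [[r [A [PA <-]]] A_max].
have bounded r' B : Q r' B -> leq (zrank B) (zrank A).
  by move=> /QP [A' PA' le_BA']; exact: leq_trans le_BA' (A_max _ _ PA').
split=> //; have [B QB le_AB] := PQ r A PA.
by exists r, B; split=> //; apply/eqP; rewrite eqn_leq bounded.
Qed.

Lemma is_max_rank_transfer n (P Q : forall r, 'M[int]_(r, n) -> Prop) :
  (forall r A, P r A -> exists2 B, Q r B & leq (zrank A) (zrank B)) ->
  (forall r B, Q r B -> exists2 A, P r A & leq (zrank B) (zrank A)) ->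
  forall k, is_max_rank P k <-> is_max_rank Q k.
Proof. by move=> PQ QP k; split; apply: is_max_rank_dominated. Qed.

Theorem mainTheorem6 (n : nat)
  (phi : {rmorphism RF n -> RF n}) (psi : {rmorphism RF n -> RF n})
  (phi_alg : forall c : R, phi (cst n c) = cst n c)
  (psi_alg : forall c : R, psi (cst n c) = cst n c)
  (phi_psi : cancel psi phi) (psi_phi : cancel phi psi) :
  (forall k : nat,
     is_max_rank (fun r (A : 'M[int]_(r, n)) => dim_consistent phi A) k <->
     is_max_rank (fun r (B : 'M[int]_(r, n)) => dim_consistent psi B) k)
  /\
  (forall (s : nat) (F : 'I_s -> RF n) (k : nat),
     is_max_rank (fun r (A : 'M[int]_(r, n)) =>
                    dim_consistent phi A /\ fixes_all A F) k <->
     is_max_rank (fun r (B : 'M[int]_(r, n)) =>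
                    dim_consistent psi B /\ fixes_all B (fun l => psi (F l))) k).
Proof.
have to_psi := dim_consistent_transfer phi_alg psi_alg phi_psi psi_phi.
have to_phi := dim_consistent_transfer psi_alg phi_alg psi_phi phi_psi.
split=> [|s F]; apply: is_max_rank_transfer.
- by move=> r A /to_psi [B [B_psi le_AB _]]; exists B.
- by move=> r B /to_phi [A [A_phi le_BA _]]; exists A.
- move=> r A [/to_psi [B [B_psi le_AB fscaleB]] A_fixes]; exists B => //.
  by split=> // lam lam_torus l; rewrite fscaleB // A_fixes.
- move=> r B [/to_phi [A [A_phi le_BA fscaleA]] B_fixes]; exists A => //.
  by split=> // lam lam_torus l; rewrite -(phi_psi (F l)) fscaleA // B_fixes.
Qed.
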